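(* Let $n\in\mathbb{N}$ and let $R$ be a ring such that $(r^n-1)((r-1)^n-1)=0$ for all $r\in R$. Then: (1) $\mathrm{char}(R)=|1\cdot\mathbb{Z}|$ is finite and $J(R)$ is a nil ideal; (2) if $n$ is odd, then $R$ is a reduced ring of characteristic $2$ and $J(R)=0$; (3) if $R$ is an algebra over a field $F$, then either $R$ is abelian or $\mathrm{char}(F)$ divides $n$.
   Context: All rings are associative with identity; $J(R)$ is the Jacobson radical and $\mathrm{char}(R):=|1\cdot\mathbb{Z}|$. A ring is reduced if it has no nonzero nilpotent elements, and abelian if all its idempotents are central. *)

From HB Require Import structures.
From mathcomp Require Import all_boot all_order all_algebra.
Set Implicit Arguments. Unset Strict Implicit. Unset Printing Implicit Defensive.
Import GRing.Theory.
Local Open Scope ring_scope.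

Definition pow_cond (R : nzRingType) (n : nat) : Prop :=
  forall r : R, (r ^+ n - 1) * ((r - 1) ^+ n - 1) = 0.

(* char(R) = |1 . Z| : c is the additive order of 1 (c = 0 if infinite),
   i.e. k%:R = 0 in R exactly when c divides k. *)
Definition is_char (R : nzRingType) (c : nat) : Prop :=
  forall k : nat, (k%:R == 0 :> R) = (c %| k)%N.

Definition is_nilpotent (R : nzRingType) (x : R) : Prop :=
  exists k : nat, x ^+ k = 0.

Definition reduced (R : nzRingType) : Prop :=
  forall x : R, is_nilpotent x -> x = 0.

Definition abelian_ring (R : nzRingType) : Prop :=
  forall e : R, e * e = e -> forall x : R, e * x = x * e.

Definition left_ideal (R : nzRingType) (I : R -> Prop) : Prop :=
  [/\ I 0, (forall x y, I x -> I y -> I (x + y)) & (forall r x, I x -> I (r * x))].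

Definition maximal_left_ideal (R : nzRingType) (I : R -> Prop) : Prop :=
  [/\ left_ideal I, ~ I 1 &
      forall J : R -> Prop, left_ideal J -> ~ J 1 ->
        (forall x, I x -> J x) -> forall x, J x -> I x].

Definition jacobson (R : nzRingType) (x : R) : Prop :=
  forall I : R -> Prop, maximal_left_ideal I -> I x.

From HB Require Import structures.
From mathcomp Require Import all_boot all_order all_algebra.
From mathcomp Require Import boolp classical_sets.
Set Implicit Arguments.
Unset Strict Implicit.
Import GRing.Theory.
Local Open Scope ring_scope.

(* Substituting r = 1 + y with y^2 = 0 into the identity gives n y = 0, and r = 3
   gives (3^n - 1)(2^n - 1) = 0, so the characteristic is positive; for odd n,
   r = 0 gives 2 = 0, after which n y = y kills every square-zero element, so R is
   reduced.  Every x is a root of the monic integer polynomial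
   (X^n - 1)((X - 1)^n - 1): reducing X^k modulo it, with coefficients taken modulo
   the characteristic, leaves finitely many values for x^k, so two powers of x
   coincide and some positive power of x is idempotent.  An idempotent e of J(R)
   vanishes since 1 - e has a left inverse u, as e = u (1 - e) e; hence J(R) is nil.
   For an F-algebra with n <> 0 in F square-zero elements vanish again, and the
   square-zero elements e x (1 - e) and (1 - e) x e show that idempotents are
   central. *)

Definition sqr0_free (R : nzRingType) : Prop := forall y : R, y * y = 0 -> y = 0.

Section SquareZero.
Variable R : nzRingType.

Lemma exprD1_sqr0 (y : R) k : y * y = 0 -> (1 + y) ^+ k = 1 + y *+ k.
Proof.
move=> yy; elim: k => [|k IHk]; first by rewrite expr0 mulr0n addr0.
by rewrite exprSr IHk mulrDl mul1r mulrDr mulr1 mulrnAl yy mul0rn addr0 mulrS addrA.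
Qed.

Lemma sqr0_free_reduced : sqr0_free R -> reduced R.
Proof.
move=> Rsqr0 x [[|k]]; first by move/eqP; rewrite expr0 oner_eq0.
elim: k => [|k IHk] xk; first by rewrite expr1 in xk.
by apply/IHk/Rsqr0; rewrite -exprD -addSnnS exprD xk mul0r.
Qed.

Lemma sqr0_free_abelian : sqr0_free R -> abelian_ring R.
Proof.
move=> Rsqr0 e ee x.
have e_1Be : e * (1 - e) = 0 by rewrite mulrBr ee mulr1 subrr.
have _1Be_e : (1 - e) * e = 0 by rewrite mulrBl ee mul1r subrr.
have /eqP : e * x * (1 - e) = 0.
  by apply: Rsqr0; rewrite -!mulrA [(1 - e) * (e * _)]mulrA _1Be_e mul0r !mulr0.
have /eqP : (1 - e) * x * e = 0.
  by apply: Rsqr0; rewrite -!mulrA [e * ((1 - e) * _)]mulrA e_1Be mul0r !mulr0.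
rewrite mulrBr mulr1 mulrBl mul1r mulrBl !subr_eq0 => /eqP-> /eqP->.
by rewrite -[RHS]mulrA ee.
Qed.

End SquareZero.

Section Characteristic.
Variable R : nzRingType.

Lemma is_char_exists m :
  (0 < m)%N -> m%:R = 0 :> R -> exists c, (0 < c)%N /\ is_char R c.
Proof.
move=> m_gt0 mR.
have : exists k, (0 < k)%N && (k%:R == 0 :> R) by exists m; rewrite m_gt0 mR eqxx.
case/ex_minnP=> c /andP[c_gt0 /eqP cR] c_min; exists c; split=> // k.
apply/idP/idP=> [kR|/dvdnP[q ->]]; last by rewrite natrM cR mulr0.
rewrite /dvdn; apply: contraLR kR; rewrite -lt0n => kc_gt0.
have kc_eq : (k %% c)%:R = k%:R :> R.
  by rewrite {2}(divn_eq k c) natrD natrM cR mulr0 add0r.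
apply: contraL (ltn_pmod k c_gt0); rewrite -kc_eq -leqNgt => kcR.
by apply: c_min; rewrite kc_gt0.
Qed.

Lemma is_char_pchar p : p \in [pchar R] -> is_char R p.
Proof. by move=> Rp k; rewrite (dvdn_pcharf Rp). Qed.

End Characteristic.

Definition pow_cond_poly (n : nat) : {poly int} := ('X^n - 1) * (('X - 1) ^+ n - 1).

Section PowCond.
Variables (R : nzRingType) (n : nat).
Hypotheses (n_gt0 : (0 < n)%N) (Rn : pow_cond R n).

Lemma pow_cond_sqr0_mulrn (y : R) : y * y = 0 -> y *+ n = 0.
Proof.
move=> yy; move: (Rn (1 + y)); rewrite exprD1_sqr0 // !(addrC 1) !addrK.
case: n n_gt0 => // k _.
rewrite mulrBr mulr1 mulrnAl exprS mulrA yy mul0r mul0rn sub0r.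
by move/eqP; rewrite oppr_eq0 => /eqP.
Qed.

Lemma pow_cond_natr_eq0 : exists2 m, (0 < m)%N & m%:R = 0 :> R.
Proof.
have pow_gt1 b : (1 < b)%N -> (1 < b ^ n)%N.
  by move=> b_gt1; rewrite -(exp1n n) ltn_exp2r.
exists ((3 ^ n).-1 * (2 ^ n).-1)%N.
  by rewrite muln_gt0 -!subn1 !subn_gt0 !pow_gt1.
have predR b : (0 < b)%N -> b.-1%:R = b%:R - 1 :> R.
  by case: b => // b _; rewrite mulrSr addrK.
move: (Rn 3%:R); have -> : 3%:R - 1 = 2%:R :> R by rewrite mulrSr addrK.
by rewrite natrM !predR ?expn_gt0 // !natrX.
Qed.

Lemma pow_cond_odd_pchar2 : odd n -> 2%N \in [pchar R].
Proof.
move=> n_odd; apply/andP; split=> //; move: (Rn 0).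
rewrite expr0n eqn0Ngt n_gt0 sub0r -signr_odd n_odd.
by rewrite mulrBr mulr1 mulrN1 opprK => /eqP.
Qed.

Lemma pow_cond_odd_sqr0_free : odd n -> sqr0_free R.
Proof.
move=> n_odd y /pow_cond_sqr0_mulrn.
rewrite -(odd_double_half n) n_odd mulrnDr -mul2n mulrnA.
by rewrite (mulrn_pchar (pow_cond_odd_pchar2 n_odd)) mul0rn addr0.
Qed.

End PowCond.

Lemma pow_cond_poly_monic n : (0 < n)%N -> pow_cond_poly n \is monic.
Proof.
move=> n_gt0; rewrite monicMl ?monicXnsubC // monicE lead_coefDl.
  by rewrite -monicE monic_exp ?monicXsubC.
by rewrite size_polyN size_poly1 size_exp_XsubC.
Qed.

Lemma pow_cond_root (R : nzRingType) n (x : R) :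
  pow_cond R n -> (map_poly intr (pow_cond_poly n)).[x] = 0.
Proof.
move=> Rn; change (horner_morph (commr_int x) (pow_cond_poly n) = 0).
by rewrite !(rmorphM, rmorphB, rmorphXn, rmorph1) /= horner_morphX.
Qed.

Lemma intr_modz (R : pzRingType) (c : nat) (z : int) :
  (0 < c)%N -> c%:R = 0 :> R -> z%:~R = (absz (z %% c)%Z)%:R :> R.
Proof.
move=> c_gt0 cR; have c_neq0 : c%:Z != 0 by rewrite -lt0n.
rewrite {1}(divz_eq z c) intrD intrM -[(c%:Z)%:~R]/(c%:R) cR mulr0 add0r.
by rewrite pmulrn gez0_abs ?modz_ge0.
Qed.

Lemma absz_modz_ltn (z : int) (c : nat) : (0 < c)%N -> (absz (z %% c)%Z < c)%N.
Proof.
move=> c_gt0; have c_neq0 : c%:Z != 0 by rewrite -lt0n.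
by rewrite -ltz_nat gez0_abs ?modz_ge0 ?ltz_pmod.
Qed.

Section IntegralPowers.
Variables (R : nzRingType) (p : {poly int}) (c : nat) (x : R).
Hypotheses (p_monic : p \is monic) (px : (map_poly intr p).[x] = 0).
Hypotheses (c_gt0 : (0 < c)%N) (cR : c%:R = 0 :> R).

Lemma exprn_rmodp k : x ^+ k = (map_poly intr (Pdiv.Ring.rmodp 'X^k p)).[x].
Proof.
have -> : x ^+ k = horner_morph (commr_int x) 'X^k.
  by rewrite rmorphXn /= horner_morphX.
rewrite {1}(Pdiv.RingMonic.rdivp_eq p_monic 'X^k) rmorphD rmorphM /=.
by rewrite [horner_morph _ p]px mulr0 add0r.
Qed.

Let coefs k : {ffun 'I_(size p) -> 'I_c} :=
  [ffun i : 'I_(size p) => Ordinal (absz_modz_ltn ((Pdiv.Ring.rmodp 'X^k p)`_i) c_gt0)].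

Lemma exprn_coefs k : x ^+ k = \sum_(i < size p) (coefs k i)%:R * x ^+ i.
Proof.
have size_rmodp :
    (size (map_poly intr (Pdiv.Ring.rmodp 'X^k p) : {poly R}) <= size p)%N.
  apply: leq_trans (size_poly _ _) (ltnW _).
  by rewrite Pdiv.Ring.ltn_rmodp monic_neq0.
rewrite exprn_rmodp (horner_coef_wide _ size_rmodp).
by apply: eq_bigr => i _; rewrite coef_map /= ffunE (intr_modz _ c_gt0 cR).
Qed.

Lemma exprn_periodic : exists i j, (i < j)%N /\ x ^+ i = x ^+ j.
Proof.
pose T := {ffun 'I_(size p) -> 'I_c}.
have : ~~ injectiveb (fun k : 'I_#|T|.+1 => coefs k).
  by apply/negP => /injectiveP/leq_card; rewrite card_ord ltnn.
case/injectivePn=> k1 [k2 k12 coefs12].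
have x12 : x ^+ k1 = x ^+ k2 by rewrite !exprn_coefs coefs12.
case: (ltngtP k1 k2) => [lt12|lt21|/val_inj eq12]; first by exists k1, k2.
  by exists k2, k1.
by rewrite eq12 eqxx in k12.
Qed.

End IntegralPowers.

Lemma exprn_idempotent (R : nzRingType) (x : R) i j :
  (i < j)%N -> x ^+ i = x ^+ j -> exists2 m, (0 < m)%N & x ^+ m * x ^+ m = x ^+ m.
Proof.
move=> lt_ij xij; pose d := (j - i)%N.
have d_gt0 : (0 < d)%N by rewrite subn_gt0.
have x_period t : x ^+ (i + t * d) = x ^+ i.
  elim: t => [|t IHt]; first by rewrite mul0n addn0.
  by rewrite mulSn addnCA exprD IHt -exprD subnK ?(ltnW lt_ij) // -xij.
have lt_im : (i < i.+1 * d)%N by rewrite leq_pmulr.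
exists (i.+1 * d)%N; first exact: leq_ltn_trans lt_im.
rewrite -exprD -{1}(subnK (ltnW lt_im)) -addnA exprD x_period -exprD.
by rewrite subnK // ltnW.
Qed.

Section Jacobson.
Variable R : nzRingType.
Local Open Scope classical_set_scope.

Lemma jacobson_mull (a x : R) : jacobson x -> jacobson (a * x).
Proof. by move=> Jx I MI; case: (MI) => [[_ _ Imul] _ _]; exact: Imul (Jx I MI). Qed.

Lemma left_ideal_maximal_ext (I : R -> Prop) :
  left_ideal I -> ~ I 1 -> exists2 M, maximal_left_ideal M & forall x, I x -> M x.
Proof.
move=> I_left I1.
(* [set0] is admitted only so that the empty chain has an upper bound. *)
pose P : set (set R) := [set X | X = set0 \/ [/\ left_ideal X, ~ X 1 & I `<=` X]].
have chainP F : F `<=` P -> total_on F subset -> P (\bigcup_(X in F) X).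
  move=> FP Ftot.
  have [[x0 [X0 FX0 X0x0]]|Fnil] := pselect (exists x, (\bigcup_(X in F) X) x);
    last by left; apply/seteqP; split=> // x Fx; apply: Fnil; exists x.
  have ideal X x : F X -> X x -> [/\ left_ideal X, ~ X 1 & I `<=` X].
    by move=> FX Xx; case: (FP X FX) => // X_nil; rewrite X_nil in Xx.
  have [[X0_0 _ _] _ IX0] := ideal X0 x0 FX0 X0x0.
  right; split; [split|move=> [X FX X1]|by move=> x /IX0; exists X0].
  - by exists X0.
  - move=> x y [X FX Xx] [Y FY Yy].
    have [[[_ Xadd _] _ _] [[_ Yadd _] _ _]] := (ideal X x FX Xx, ideal Y y FY Yy).
    have [XY|YX] := Ftot X Y FX FY.
      by exists Y => //; apply: Yadd (XY x Xx) Yy.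
    by exists X => //; apply: Xadd Xx (YX y Yy).
  - move=> r x [X FX Xx]; exists X => //.
    by case: (ideal X x FX Xx) => [[_ _ Xmul] _ _]; apply: Xmul.
  - by case: (ideal X 1 FX X1).
have [M [PM Mmax]] := Zorn_bigcup chainP.
have [M_left M1 IM] : [/\ left_ideal M, ~ M 1 & I `<=` M].
  case: PM => [M0|//]; exfalso; apply: (Mmax I); last by right; split.
  rewrite M0; split=> // I_sub0; case: I_left => I0 _ _; exact: I_sub0 _ I0.
exists M => //; split=> // J J_left J1 MJ x Jx; apply: contrapT => Mx.
apply: (Mmax J); last by right; split=> // y /IM /MJ.
by split=> // JM; exact: Mx (JM x Jx).
Qed.

Lemma jacobson_subr1_linv (j : R) : jacobson j -> exists u, u * (1 - j) = 1.
Proof.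
move=> Jj; apply: contrapT => no_linv.
pose I y := exists u, y = u * (1 - j).
have [|I1|M MM IM] := @left_ideal_maximal_ext I.
- split; first by exists 0; rewrite mul0r.
    by move=> _ _ [u ->] [v ->]; exists (u + v); rewrite mulrDl.
  by move=> r _ [u ->]; exists (r * u); rewrite mulrA.
- by case: I1 => u u1; apply: no_linv; exists u.
- case: (MM) => [[_ Madd _] M1 _]; apply: M1.
  rewrite -(subrK j 1); apply: Madd (Jj M MM).
  by apply: IM; exists 1; rewrite mul1r.
Qed.

Lemma jacobson_idem_eq0 (e : R) : e * e = e -> jacobson e -> e = 0.
Proof.
move=> ee /jacobson_subr1_linv[u ue]; rewrite -[e]mul1r -ue -mulrA.
by rewrite mulrBl ee mul1r subrr mulr0.
Qed.

Lemma jacobson_periodic_nil (x : R) i j :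
  (i < j)%N -> x ^+ i = x ^+ j -> jacobson x -> is_nilpotent x.
Proof.
move=> lt_ij xij Jx; have [[|m] // _ xm_idem] := exprn_idempotent lt_ij xij.
exists m.+1; apply: jacobson_idem_eq0 xm_idem _.
by rewrite exprSr; apply: jacobson_mull.
Qed.

End Jacobson.

Lemma alg_pow_cond_sqr0_free (F : fieldType) (A : algType F) n :
  (0 < n)%N -> pow_cond A n -> n%:R != 0 :> F -> sqr0_free A.
Proof.
move=> n_gt0 An nF y /(pow_cond_sqr0_mulrn n_gt0 An) /eqP.
by rewrite -scaler_nat scaler_eq0 (negbTE nF) => /eqP.
Qed.

Theorem lemma2p2 (n : nat) (hn : (0 < n)%N) :
  (forall R : nzRingType, pow_cond R n ->
     ((exists c : nat, (0 < c)%N /\ is_char R c) /\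
      (forall x : R, jacobson x -> is_nilpotent x)) /\
     (odd n ->
        [/\ reduced R, is_char R 2 & forall x : R, jacobson x -> x = 0]))
  /\
  (forall (F : fieldType) (A : algType F), pow_cond A n ->
     abelian_ring A \/ (forall c : nat, is_char F c -> (c %| n)%N)).
Proof.
split=> [R Rn | F A An].
  have [m m_gt0 mR] := pow_cond_natr_eq0 hn Rn.
  have J_nil (x : R) : jacobson x -> is_nilpotent x.
    have [i [j [lt_ij xij]]] :=
      exprn_periodic (pow_cond_poly_monic hn) (pow_cond_root x Rn) m_gt0 mR.
    exact: jacobson_periodic_nil lt_ij xij.
  split; first by split=> //; exact: is_char_exists m_gt0 mR.
  move=> n_odd.
  have R_reduced := sqr0_free_reduced (pow_cond_odd_sqr0_free hn Rn n_odd).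
  split=> //; first exact: is_char_pchar (pow_cond_odd_pchar2 hn Rn n_odd).
  by move=> x /J_nil; apply: R_reduced.
have [nF0|nF] := eqVneq (n%:R : F) 0.
  by right=> c Fc; rewrite -Fc nF0.
by left; apply/sqr0_free_abelian/(alg_pow_cond_sqr0_free hn An nF).
Qed.
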